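(* Let $n\ge 2$, $d\ge 2$, let $\{1,\dots,n\}=\beta\,\dot\cup\,\overline{\beta}$ be a bipartition into nonempty sets with $k_1=|\beta|$, $k_2=|\overline{\beta}|$ (so $k_1+k_2=n$), and let $x$ be an integer. For every state $\rho$ on $(\mathbb{C}^d)^{\otimes n}$ that is separable with respect to the bipartition $(\beta|\overline{\beta})$, $$\mathcal{C}_x(\rho)\le (d^{k_1}-1)(d^{k_2}-1)+\sum_{j\in\{1,2\}:\,k_j\ge x}(d^{k_j}-1).$$
   Context: Consider $n$ qudits with Hilbert space $(\mathbb{C}^d)^{\otimes n}$. Let $\lambda_0=\mathbb{1}_d$ and let $\lambda_1,\dots,\lambda_{d^2-1}$ be Hermitian traceless $d\times d$ matrices normalized so that $\mathrm{Tr}[\lambda_i\lambda_j]=d\,\delta_{ij}$. For a nonempty subset $\alpha\subseteq\{1,\dots,n\}$ and a state $\rho$ with reduced state $\rho_\alpha$, define $\|\tau_\alpha(\rho)\|^2=\sum_{(i_k)_{k\in\alpha}\in\{1,\dots,d^2-1\}^{\alpha}}\big(\mathrm{Tr}[\rho_\alpha\bigotimes_{k\in\alpha}\lambda_{i_k}]\big)^2$. For a real number $x$ define $\mathcal{C}_x(\rho)=\sum_{\alpha\neq\emptyset,\ |\alpha|\ge x}\|\tau_\alpha(\rho)\|^2$. A state is separable with respect to the bipartition $(\beta|\overline{\beta})$ if it is a convex combination of pure states of the form $|\phi\rangle_\beta\otimes|\chi\rangle_{\overline{\beta}}$. *)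

From HB Require Import structures.
From mathcomp Require Import all_boot all_order all_algebra all_field.
Set Implicit Arguments. Unset Strict Implicit. Unset Printing Implicit Defensive.
Import Order.TTheory GRing.Theory Num.Theory.
Local Open Scope ring_scope.

(* Computational basis labels of (C^d)^{\otimes n}: x : 'I_n -> 'I_d. *)
Definition basis_idx (n d : nat) := {ffun 'I_n -> 'I_d}.

(* Operators on (C^d)^{\otimes n}, as kernels (matrix entries). *)
Definition op (n d : nat) := basis_idx n d -> basis_idx n d -> algC.

Definition tensor_op (n d : nat) (mu : 'I_n -> 'M[algC]_d) : op n d :=
  fun x y => \prod_(k < n) mu k (x k) (y k).

Definition tr_mul (n d : nat) (rho A : op n d) : algC :=
  \sum_(x : basis_idx n d) \sum_(y : basis_idx n d) rho x y * A y x.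

Definition gm_basis (d : nat) (lam : 'I_(d ^ 2 - 1) -> 'M[algC]_d) : Prop :=
  [/\ forall a i j, lam a j i = (lam a i j)^*,
      forall a, \tr (lam a) = 0
    & forall a b, \tr (lam a *m lam b) = d%:R * (a == b)%:R].

(* Tr[rho_alpha (x)_{k in alpha} lambda_{i_k}]
   = Tr[rho ((x)_{k in alpha} lambda_{i_k} (x) 1_{complement})]. *)
Definition site_op (n d : nat) (lam : 'I_(d ^ 2 - 1) -> 'M[algC]_d)
  (alpha : {set 'I_n}) (i : {ffun {k : 'I_n | k \in alpha} -> 'I_(d ^ 2 - 1)})
  (k : 'I_n) : 'M[algC]_d :=
  match (insub k : option {k : 'I_n | k \in alpha}) with
  | Some k' => lam (i k')
  | None => 1%:M
  end.

Definition tau_norm2 (n d : nat) (lam : 'I_(d ^ 2 - 1) -> 'M[algC]_d)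
  (alpha : {set 'I_n}) (rho : op n d) : algC :=
  \sum_(i : {ffun {k : 'I_n | k \in alpha} -> 'I_(d ^ 2 - 1)})
     (tr_mul rho (tensor_op (site_op lam i))) ^+ 2.

Definition Cx (n d : nat) (lam : 'I_(d ^ 2 - 1) -> 'M[algC]_d) (x : int)
  (rho : op n d) : algC :=
  \sum_(alpha : {set 'I_n} | (alpha != set0) && (x <= (#|alpha|)%:Z)%R)
     tau_norm2 lam alpha rho.

(* A vector on the full space that only depends on the coordinates in S,
   i.e. a vector of the subsystem S (identified with its tensor with
   the uniform pattern on the complement). *)
Definition depends_only_on (n d : nat) (S : {set 'I_n})
  (phi : basis_idx n d -> algC) : Prop :=
  forall x y : basis_idx n d, (forall k, k \in S -> x k = y k) -> phi x = phi y.

Definition separable_bip (n d : nat) (beta : {set 'I_n}) (rho : op n d) : Prop :=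
  exists (m : nat) (p : 'I_m -> algC)
         (phi chi : 'I_m -> basis_idx n d -> algC),
    [/\ (forall j, 0 <= p j) /\ \sum_(j < m) p j = 1,
        forall j, depends_only_on beta (phi j),
        forall j, depends_only_on (setC beta) (chi j),
        forall j, \sum_(x : basis_idx n d) `|phi j x * chi j x| ^+ 2 = 1
      & forall x y, rho x y =
          \sum_(j < m) p j * ((phi j x * chi j x) * (phi j y * chi j y)^*)].

From mathcomp Require Import all_boot all_order all_algebra all_field.
From mathcomp Require Import ring.
Import Order.TTheory GRing.Theory Num.Theory.
Local Open Scope ring_scope.
Set Implicit Arguments. Unset Strict Implicit. Unset Printing Implicit Defensive.

(* Expand in the product basis Lambda_J = (x)_k lambda_(J k), with lambda_None the
   identity: C_x(rho) is the sum of the squared correlations Tr[rho Lambda_J] over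
   the strings J with nonempty support of size at least x.  Correlations are affine
   in rho and squaring is convex, so it suffices to bound a pure product state
   psi = phi (x) chi.  Its correlation with a string factorises into the
   correlations of the beta-part and of the complementary part, and Bessel's
   inequality for the orthogonal family of strings supported in S (Hilbert-Schmidt
   norm d^|S|) gives sum_(supp J <= S) Tr[psi Lambda_J]^2 <= d^|S|.  Splitting off
   the identity string, whose correlation is 1, from both factors and expanding
   the product yields the bound. *)

(* Pythagoras: r splits orthogonally into its projection v on the span of the
   [b i] and [r - v], and [\sum_p `|v p| ^+ 2] is the left-hand side over [c]. *)
Lemma bessel_inequality (T I : finType) (P : pred I) (b : I -> T -> algC)
    (r : T -> algC) (c : algC) :
  0 < c -> (forall i j, P i -> P j -> \sum_p (b i p)^* * b j p = c * (i == j)%:R) ->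
  \sum_(i | P i) `|\sum_p (b i p)^* * r p| ^+ 2 <= c * \sum_p `|r p| ^+ 2.
Proof.
move=> c_gt0 b_orth.
set a := fun i => \sum_p (b i p)^* * r p.
set s := \sum_(i | P i) `|a i| ^+ 2.
set v := fun p => c^-1 * \sum_(i | P i) a i * b i p.
have c_real : c^-1^* = c^-1 by apply/CrealP; rewrite rpredV; exact: gtr0_real.
have s_real : s^* = s.
  by apply/CrealP; apply: ger0_real; apply: sumr_ge0 => i _; apply: exprn_ge0.
have v_r : \sum_p v p * (r p)^* = c^-1 * s.
  transitivity (c^-1 * \sum_(i | P i) \sum_p a i * (b i p * (r p)^*)).
    rewrite exchange_big big_distrr /=; apply: eq_bigr => p _.
    rewrite /v -mulrA big_distrl /=; congr (_ * _); apply: eq_bigr => i _.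
    by rewrite mulrA.
  congr (_ * _); apply: eq_bigr => i _; rewrite -big_distrr /= normCK /a.
  by rewrite rmorph_sum; congr (_ * _); apply: eq_bigr => p _; rewrite rmorphM /= conjCK.
have r_v : \sum_p r p * (v p)^* = c^-1 * s.
  have e : (c^-1 * s)^* = c^-1 * s by rewrite rmorphM /= c_real s_real.
  rewrite -e -v_r rmorph_sum.
  by apply: eq_bigr => p _; rewrite /= [RHS]rmorphM /= conjCK mulrC.
have v_v : \sum_p v p * (v p)^* = c^-1 * s.
  have vvE p : v p * (v p)^* = c^-1 * c^-1 *
      \sum_(i | P i) \sum_(j | P j) a i * (a j)^* * ((b j p)^* * b i p).
    rewrite /v rmorphM /= c_real rmorph_sum /= mulrACA big_distrlr /=.
    congr (_ * _); apply: eq_bigr => i _; apply: eq_bigr => j _.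
    by rewrite rmorphM /=; ring.
  rewrite (eq_bigr _ (fun p _ => vvE p)) -big_distrr /= exchange_big /=.
  transitivity (c^-1 * c^-1 * \sum_(i | P i) a i * (a i)^* * c).
    congr (_ * _); apply: eq_bigr => i Pi.
    rewrite exchange_big (bigD1 i) //= [X in _ + X]big1 ?addr0.
      by rewrite -big_distrr /= b_orth // eqxx mulr1.
    move=> j /andP[Pj neq_ji]; rewrite -big_distrr /= b_orth // (negbTE neq_ji).
    by rewrite !mulr0.
  rewrite -big_distrl /=; under eq_bigr do rewrite -normCK.
  by rewrite -/s; field; rewrite lt0r_neq0.
have : 0 <= \sum_p `|r p - v p| ^+ 2 by apply: sumr_ge0 => p _; apply: exprn_ge0.
under eq_bigr do rewrite normCK rmorphB /= mulrBl !mulrBr.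
rewrite !sumrB v_r r_v v_v; under eq_bigr do rewrite -normCK.
by rewrite subrr subr0 subr_ge0 ler_pdivrMl.
Qed.

Lemma sqr_convex_comb_le (m : nat) (p a : 'I_m -> algC) :
  (forall j, 0 <= p j) -> \sum_j p j = 1 -> (forall j, a j \is Num.real) ->
  (\sum_j p j * a j) ^+ 2 <= \sum_j p j * a j ^+ 2.
Proof.
move=> p_ge0 p_sum1 a_real; set M := \sum_j p j * a j.
have M_real : M \is Num.real.
  by apply: rpred_sum => j _; apply: rpredM; [apply: ger0_real|].
have : 0 <= \sum_j p j * (a j - M) ^+ 2.
  by apply: sumr_ge0 => j _; rewrite mulr_ge0 // -realEsqr rpredB.
have -> : \sum_j p j * (a j - M) ^+ 2 =
          \sum_j p j * a j ^+ 2 - M *+ 2 * M + M ^+ 2 * \sum_j p j.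
  transitivity (\sum_j (p j * a j ^+ 2 - M *+ 2 * (p j * a j) + M ^+ 2 * p j)).
    by apply: eq_bigr => j _; ring.
  by rewrite big_split sumrB /= -!big_distrr.
by rewrite p_sum1 (_ : _ + _ = \sum_j p j * a j ^+ 2 - M ^+ 2) ?subr_ge0 //; ring.
Qed.

(* [(s, t) |-> (m s t, m t s)] is an involution of [T * T] moving the part of
   [t] that [g] reads into the first component. *)
Lemma sum_mul_merge (T : finType) (m : T -> T -> T) (f g : T -> algC) :
  (forall s t, m (m s t) (m t s) = s) ->
  (forall s t, f (m s t) = f s) -> (forall s t, g (m s t) = g t) ->
  (\sum_s f s) * (\sum_t g t) = #|T|%:R * \sum_s f s * g s.
Proof.
move=> mK f_m g_m; rewrite big_distrlr /= pair_bigA /=.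
pose sigma (q : T * T) := (m q.1 q.2, m q.2 q.1).
have sigmaK : involutive sigma by case=> s t; rewrite /sigma /= !mK.
rewrite (reindex_inj (inv_inj sigmaK)) /=.
under eq_bigr => q _ do rewrite f_m g_m.
rewrite -(pair_bigA _ (fun s t => f s * g s)) /= exchange_big /=.
by rewrite sumr_const mulr_natl.
Qed.

Definition fmerge (n : nat) (A : finType) (S : {set 'I_n}) (s t : {ffun 'I_n -> A}) :
  {ffun 'I_n -> A} := [ffun k => if k \in S then s k else t k].

Section Merge.
Variables (n : nat) (A : finType) (S : {set 'I_n}).
Implicit Types s t u : {ffun 'I_n -> A}.

Lemma fmergeK s t : fmerge S (fmerge S s t) (fmerge S t s) = s.
Proof. by apply/ffunP => k; rewrite !ffunE; case: (k \in S). Qed.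

Lemma fmerge_fmergel s u t : fmerge S (fmerge S s u) t = fmerge S s t.
Proof. by apply/ffunP => k; rewrite !ffunE; case: (k \in S). Qed.

Lemma fmergeC_fmerge s u t : fmerge (~: S) (fmerge S s u) t = fmerge (~: S) u t.
Proof. by apply/ffunP => k; rewrite !ffunE in_setC; case: (k \in S). Qed.

Lemma fmergeC s t : fmerge (~: S) t s = fmerge S s t.
Proof. by apply/ffunP => k; rewrite !ffunE in_setC; case: (k \in S). Qed.

Lemma ffun_neq_exists s t : s != t -> exists k, s k != t k.
Proof.
move=> neq_st; apply/existsP; apply: contraR neq_st => /existsPn eq_st.
by apply/eqP/ffunP => k; apply/eqP; move: (eq_st k); rewrite negbK.
Qed.

End Merge.

Section MergeBasis.
Variables (n d : nat) (S : {set 'I_n}) (f : basis_idx n d -> algC).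

Lemma depends_fmergel s t : depends_only_on S f -> f (fmerge S s t) = f s.
Proof. by move=> f_S; apply: f_S => k kS; rewrite ffunE kS. Qed.

Lemma depends_fmerger s t : depends_only_on (~: S) f -> f (fmerge S s t) = f t.
Proof. by move=> f_S; apply: f_S => k; rewrite in_setC ffunE => /negbTE ->. Qed.

End MergeBasis.

Definition pair_fmerge n d (S : {set 'I_n}) (p q : basis_idx n d * basis_idx n d) :=
  (fmerge S p.1 q.1, fmerge S p.2 q.2).

Lemma pair_fmergeK n d S (p q : basis_idx n d * basis_idx n d) :
  pair_fmerge S (pair_fmerge S p q) (pair_fmerge S q p) = p.
Proof. by case: p q => [p1 p2] [q1 q2]; rewrite /pair_fmerge /= !fmergeK. Qed.

Lemma tr_mul_pairs n d (rho A : op n d) :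
  tr_mul rho A = \sum_(p : basis_idx n d * basis_idx n d) rho p.1 p.2 * A p.2 p.1.
Proof. by rewrite /tr_mul pair_bigA. Qed.

Definition gm_mx d (lam : 'I_(d ^ 2 - 1) -> 'M[algC]_d) (o : option 'I_(d ^ 2 - 1)) :
  'M[algC]_d := if o is Some a then lam a else 1%:M.

Definition gm_string n d := {ffun 'I_n -> option 'I_(d ^ 2 - 1)}.

Definition id_string n d : gm_string n d := [ffun => None].

Definition string_supp n d (J : gm_string n d) : {set 'I_n} := [set k | J k != None].

Definition restrict n d (S : {set 'I_n}) (J : gm_string n d) := fmerge S J (id_string n d).

Definition string_op n d lam (J : gm_string n d) : op n d :=
  tensor_op (fun k => gm_mx lam (J k)).

Definition string_op_on n d lam (S : {set 'I_n}) (J : gm_string n d) : op n d :=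
  fun y x => \prod_(k in S) gm_mx lam (J k) (y k) (x k).

Definition corr n d lam (rho : op n d) (J : gm_string n d) : algC :=
  tr_mul rho (string_op lam J).

Section Strings.
Variables (n d : nat) (lam : 'I_(d ^ 2 - 1) -> 'M[algC]_d).
Implicit Types (S T : {set 'I_n}) (J : gm_string n d) (rho : op n d).

Lemma restrictP S J : reflect (restrict S J = J) (string_supp J \subset S).
Proof.
apply: (iffP subsetP) => [J_S|<- k]; last first.
  by rewrite !inE !ffunE; case: (k \in S); rewrite ?eqxx.
apply/ffunP => k; rewrite !ffunE; case: ifP => // kS.
by apply/eqP; apply: contraFT kS => Jk; apply: J_S; rewrite inE eq_sym.
Qed.

Lemma string_supp_id : string_supp (id_string n d) = set0.
Proof. by apply/setP => k; rewrite !inE ffunE eqxx. Qed.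

Lemma restrict_id S : restrict S (id_string n d) = id_string n d.
Proof. by apply/restrictP; rewrite string_supp_id sub0set. Qed.

Lemma string_op_split S J y x :
  string_op lam J y x = string_op_on lam S J y x * string_op_on lam (~: S) J y x.
Proof.
rewrite /string_op /tensor_op /string_op_on (bigID (mem S)) /=; congr (_ * _).
by apply: eq_bigl => k; rewrite in_setC.
Qed.

Lemma string_op_on_fmerge S J y y' x x' :
  string_op_on lam S J (fmerge S y y') (fmerge S x x') = string_op_on lam S J y x.
Proof. by apply: eq_bigr => k kS; rewrite !ffunE kS. Qed.

Lemma string_op_onC_fmerge S J y y' x x' :
  string_op_on lam (~: S) J (fmerge S y y') (fmerge S x x') =
  string_op_on lam (~: S) J y' x'.
Proof. by apply: eq_bigr => k; rewrite in_setC !ffunE => /negbTE ->. Qed.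

Lemma string_op_on_fmerge_in S T J J' y x : S \subset T ->
  string_op_on lam S (fmerge T J J') y x = string_op_on lam S J y x.
Proof. by move=> /subsetP sST; apply: eq_bigr => k /sST kT; rewrite ffunE kT. Qed.

Lemma string_op_on_fmerge_out S T J J' y x : [disjoint S & T] ->
  string_op_on lam S (fmerge T J J') y x = string_op_on lam S J' y x.
Proof.
move=> dST; apply: eq_bigr => k kS; rewrite ffunE.
by rewrite (disjointFr dST kS).
Qed.

Lemma string_op_id y x : string_op lam (id_string n d) y x = (y == x)%:R.
Proof.
rewrite /string_op /tensor_op; under eq_bigr do rewrite ffunE /= mxE.
have [<-|neq_yx] := eqVneq y x; first by rewrite big1 // => k _; rewrite eqxx.
have [k neq_k] := ffun_neq_exists neq_yx.
by rewrite (bigD1 k) //= (negbTE neq_k) mul0r.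
Qed.

Lemma corr_id rho : corr lam rho (id_string n d) = \sum_x rho x x.
Proof.
apply: eq_bigr => x _; rewrite (bigD1 x) //= big1 ?addr0.
  by rewrite string_op_id eqxx mulr1.
by move=> y neq_yx; rewrite string_op_id (negbTE neq_yx) mulr0.
Qed.

Hypothesis lam_gm : gm_basis lam.

Lemma gm_mx_adj o i j : gm_mx lam o j i = (gm_mx lam o i j)^*.
Proof.
case: lam_gm => lam_adj _ _; case: o => [a|] /=; first exact: lam_adj.
by rewrite !mxE conjC_nat eq_sym.
Qed.

Lemma string_op_adj J y x : string_op lam J y x = (string_op lam J x y)^*.
Proof. by rewrite rmorph_prod; apply: eq_bigr => k _; rewrite gm_mx_adj. Qed.

Lemma corr_real rho J :
  (forall x y, rho y x = (rho x y)^*) -> corr lam rho J \is Num.real.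
Proof.
move=> rho_adj; rewrite CrealE; apply/eqP.
rewrite /corr /tr_mul rmorph_sum exchange_big /=; apply: eq_bigr => y _.
rewrite rmorph_sum; apply: eq_bigr => x _; rewrite rmorphM /= -rho_adj.
by rewrite [string_op _ _ y x]string_op_adj.
Qed.

Lemma gm_mx_orthogonal o o' :
  \sum_a \sum_b gm_mx lam o b a * (gm_mx lam o' b a)^* = d%:R * (o == o')%:R.
Proof.
transitivity (\tr (gm_mx lam o *m gm_mx lam o')).
  rewrite /mxtrace exchange_big; apply: eq_bigr => b _; rewrite mxE.
  by apply: eq_bigr => a _; rewrite -gm_mx_adj.
case: lam_gm => _ lam_tr lam_orth.
case: o => [a|]; case: o' => [a'|] /=.
- by rewrite lam_orth.
- by rewrite mulmx1 lam_tr mulr0.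
- by rewrite mul1mx lam_tr mulr0.
- by rewrite mulmx1 mxtrace1 mulr1.
Qed.

End Strings.

Definition string_of_site n d (alpha : {set 'I_n})
    (i : {ffun {k : 'I_n | k \in alpha} -> 'I_(d ^ 2 - 1)}) : gm_string n d :=
  [ffun k => if insub k is Some k' then Some (i k') else None].

Definition site_of_string n d (a0 : 'I_(d ^ 2 - 1)) (alpha : {set 'I_n})
    (J : gm_string n d) : {ffun {k : 'I_n | k \in alpha} -> 'I_(d ^ 2 - 1)} :=
  [ffun k' => odflt a0 (J (val k'))].

(* [J |-> (string_supp J, J restricted to its support)] is a bijection onto the
   pairs (alpha, i) summed over in [Cx]. *)
Lemma Cx_strings n d lam (x : int) (rho : op n d) (a0 : 'I_(d ^ 2 - 1)) :
  Cx lam x rho = \sum_(J : gm_string n d | (string_supp J != set0) &&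
                                         (x <= (#|string_supp J|)%:Z)%R)
                   corr lam rho J ^+ 2.
Proof.
rewrite (partition_big (@string_supp n d)
  (fun a : {set 'I_n} => (a != set0) && (x <= (#|a|)%:Z)%R)) //=.
apply: eq_bigr => alpha alpha_ok.
rewrite (eq_bigl (fun J => string_supp J == alpha)); last first.
  by move=> J; have [->|_] := eqVneq (string_supp J) alpha; rewrite ?alpha_ok ?andbF.
rewrite (reindex_onto (@string_of_site n d alpha) (site_of_string a0 alpha)); last first.
  move=> J /eqP suppJ; apply/ffunP => k; rewrite ffunE.
  case: insubP => [k' k_alpha kk'|k_alpha].
    by rewrite ffunE /= kk'; move: k_alpha; rewrite -suppJ inE; case: (J k).
  by move: k_alpha; rewrite -suppJ inE negbK => /eqP.
rewrite /tau_norm2 (eq_bigl xpredT); last first.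
  move=> i /=; apply/andP; split.
    apply/eqP/setP => k; rewrite inE ffunE.
    by case: insubP => [k' -> _|/negbTE ->].
  by apply/eqP/ffunP => k'; rewrite !ffunE valK.
apply: eq_bigr => i _; congr (_ ^+ 2).
apply: eq_bigr => y _; apply: eq_bigr => z _; congr (_ * _).
by apply: eq_bigr => k _; rewrite /site_op ffunE; case: insub.
Qed.

Definition pure_prod n d (phi chi : basis_idx n d -> algC) : op n d :=
  fun x y => (phi x * chi x) * (phi y * chi y)^*.

Definition partial_corr n d lam (S : {set 'I_n}) (phi : basis_idx n d -> algC)
    (J : gm_string n d) : algC :=
  \sum_(p : basis_idx n d * basis_idx n d)
    phi p.1 * (phi p.2)^* * string_op_on lam S J p.2 p.1.

Definition npairs n d : algC := #|{: basis_idx n d * basis_idx n d}|%:R.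

Lemma npairs_neq0 n d : (0 < d)%N -> npairs n d != 0.
Proof.
by move=> d_gt0; rewrite pnatr_eq0 -lt0n card_prod muln_gt0 card_ffun card_ord expn_gt0 d_gt0.
Qed.

Lemma pure_prod_adj n d (phi chi : basis_idx n d -> algC) x y :
  pure_prod phi chi y x = (pure_prod phi chi x y)^*.
Proof. by rewrite /pure_prod [RHS]rmorphM /= conjCK mulrC. Qed.

Lemma corr_pure_prodC n d lam (phi chi : basis_idx n d -> algC) J :
  corr lam (pure_prod chi phi) J = corr lam (pure_prod phi chi) J.
Proof.
apply: eq_bigr => x _; apply: eq_bigr => y _.
by rewrite /pure_prod (mulrC (chi x)) (mulrC (chi y)).
Qed.

Section PureProduct.
Variables (n d : nat) (lam : 'I_(d ^ 2 - 1) -> 'M[algC]_d) (S : {set 'I_n}).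
Variables (phi chi : basis_idx n d -> algC).
Hypothesis phi_S : depends_only_on S phi.
Hypothesis chi_S : depends_only_on (~: S) chi.
Hypothesis psi_normed : \sum_x `|phi x * chi x| ^+ 2 = 1.
Implicit Types J : gm_string n d.

Local Notation corr_psi := (corr lam (pure_prod phi chi)).

Lemma corr_pure_prod_id : corr_psi (id_string n d) = 1.
Proof. by rewrite corr_id -psi_normed; apply: eq_bigr => x _; rewrite normCK. Qed.

Lemma corr_pure_prod_partial J :
  npairs n d * corr_psi J = partial_corr lam S phi J * partial_corr lam (~: S) chi J.
Proof.
rewrite /partial_corr (@sum_mul_merge _ (pair_fmerge S)); last 3 first.
- exact: pair_fmergeK.
- by move=> [p1 p2] [q1 q2]; rewrite /= !(depends_fmergel _ _ phi_S) string_op_on_fmerge.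
- by move=> [p1 p2] [q1 q2]; rewrite /= !(depends_fmerger _ _ chi_S) string_op_onC_fmerge.
congr (_ * _); rewrite /corr tr_mul_pairs; apply: eq_bigr => p _.
by rewrite (string_op_split _ S) /pure_prod rmorphM /=; ring.
Qed.

Hypothesis d_gt0 : (0 < d)%N.

(* Compare the factorisations of [J], of its two restrictions and of the
   identity string, whose correlation is [1]. *)
Lemma corr_pure_prod_restrict J :
  corr_psi J = corr_psi (restrict S J) * corr_psi (restrict (~: S) J).
Proof.
have SC_dis : [disjoint S & ~: S] by rewrite disjoints_subset setCK.
have CS_dis : [disjoint ~: S & S] by rewrite disjoints_subset.
have partial_in T (f : basis_idx n d -> algC) : partial_corr lam T f (restrict T J) =
    partial_corr lam T f J.
  by apply: eq_bigr => p _; rewrite string_op_on_fmerge_in.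
have partial_out (T U : {set 'I_n}) (f : basis_idx n d -> algC) : [disjoint T & U] ->
    partial_corr lam T f (restrict U J) = partial_corr lam T f (id_string n d).
  by move=> dTU; apply: eq_bigr => p _; rewrite string_op_on_fmerge_out.
have N_neq0 := npairs_neq0 n d_gt0.
have e_id := corr_pure_prod_partial (id_string n d).
have e_J := corr_pure_prod_partial J.
have e_S := corr_pure_prod_partial (restrict S J).
have e_C := corr_pure_prod_partial (restrict (~: S) J).
rewrite corr_pure_prod_id mulr1 in e_id.
rewrite partial_in (partial_out _ _ _ CS_dis) in e_S.
rewrite partial_in (partial_out _ _ _ SC_dis) in e_C.
apply: (mulfI N_neq0); apply: (mulfI N_neq0).
rewrite [RHS](_ : _ = (npairs n d * corr_psi (restrict S J)) *
                      (npairs n d * corr_psi (restrict (~: S) J))); last by ring.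
by rewrite e_S e_C e_J e_id; ring.
Qed.

Lemma corr_pure_prod_fmerge s u :
  string_supp s \subset S -> string_supp u \subset ~: S ->
  corr_psi (fmerge S s u) = corr_psi s * corr_psi u.
Proof.
move=> /restrictP; rewrite /restrict => s_S /restrictP; rewrite /restrict => u_C.
by rewrite corr_pure_prod_restrict /restrict fmerge_fmergel fmergeC_fmerge s_S u_C.
Qed.

End PureProduct.

Lemma sum_pairs_prod_on n d (S : {set 'I_n}) (h : 'I_n -> 'I_d -> 'I_d -> algC) :
  \sum_(p : basis_idx n d * basis_idx n d) \prod_(k in S) h k (p.2 k) (p.1 k) =
  \prod_k (if k \in S then \sum_a \sum_b h k b a else d%:R * d%:R).
Proof.
pose h' k (a b : 'I_d) := if k \in S then h k b a else 1.
rewrite -(pair_bigA _ (fun x y : basis_idx n d => \prod_(k in S) h k (y k) (x k))) /=.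
transitivity (\sum_(x : basis_idx n d) \sum_(y : basis_idx n d) \prod_k h' k (x k) (y k)).
  by apply: eq_bigr => x _; apply: eq_bigr => y _; rewrite big_mkcond.
transitivity (\prod_k \sum_a \sum_b h' k a b).
  rewrite (bigA_distr_bigA (fun k a => \sum_b h' k a b)); apply: eq_bigr => x _.
  by rewrite (bigA_distr_bigA (fun k b => h' k (x k) b)).
apply: eq_bigr => k _; rewrite /h'; case: (k \in S) => //.
by rewrite !sumr_const card_ord -mulr_natl mulr1 mulr_natl.
Qed.

(* The Hilbert-Schmidt norm d^|S| of a string on [S], times d^2 for every site
   off [S] over which the sum on pairs of basis vectors also runs. *)
Definition pair_weight n d (S : {set 'I_n}) : algC :=
  \prod_(k < n) (if k \in S then d%:R else d%:R * d%:R).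
Arguments pair_weight : clear implicits.

Lemma pair_weight_gt0 n d S : (0 < d)%N -> 0 < pair_weight n d S.
Proof.
move=> d_gt0; have d_pos : (0 : algC) < d%:R by rewrite ltr0n.
by apply: prodr_gt0 => k _; case: (k \in S); rewrite ?mulr_gt0.
Qed.

Lemma npairs_weight n d (S : {set 'I_n}) : npairs n d = d%:R ^+ #|S| * pair_weight n d S.
Proof.
rewrite /npairs /pair_weight card_prod card_ffun !card_ord natrM natrX.
transitivity (\prod_(k < n) (d%:R * d%:R : algC)).
  by rewrite prodr_const card_ord exprMn.
transitivity (\prod_(k < n) ((if k \in S then d%:R else 1) *
                            (if k \in S then d%:R else d%:R * d%:R) : algC)).
  by apply: eq_bigr => k _; case: (k \in S); rewrite ?mul1r.
by rewrite big_split /= -big_mkcond prodr_const.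
Qed.

Section SupportedBound.
Variables (n d : nat) (lam : 'I_(d ^ 2 - 1) -> 'M[algC]_d) (S : {set 'I_n}).
Hypothesis lam_gm : gm_basis lam.
Implicit Types J : gm_string n d.

Lemma string_op_on_orthogonal J J' :
  string_supp J \subset S -> string_supp J' \subset S ->
  \sum_(p : basis_idx n d * basis_idx n d)
     string_op_on lam S J p.2 p.1 * (string_op_on lam S J' p.2 p.1)^* =
  pair_weight n d S * (J == J')%:R.
Proof.
move=> /restrictP J_S /restrictP J'_S.
transitivity (\sum_(p : basis_idx n d * basis_idx n d) \prod_(k in S)
    (gm_mx lam (J k) (p.2 k) (p.1 k) * (gm_mx lam (J' k) (p.2 k) (p.1 k))^*)).
  by apply: eq_bigr => p _; rewrite /string_op_on rmorph_prod -big_split.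
rewrite (sum_pairs_prod_on S
  (fun k b a => gm_mx lam (J k) b a * (gm_mx lam (J' k) b a)^*)).
under eq_bigr do rewrite gm_mx_orthogonal //.
have [<-|neq_JJ'] := eqVneq J J'.
  by rewrite mulr1; apply: eq_bigr => k _; rewrite eqxx mulr1.
rewrite mulr0; have [k neq_k] := ffun_neq_exists neq_JJ'.
have kS : k \in S.
  by apply: contraR neq_k => kS; rewrite -J_S -J'_S !ffunE (negbTE kS).
by rewrite (bigD1 k) //= kS (negbTE neq_k) mulr0 mul0r.
Qed.

Lemma partial_corr_id (chi : basis_idx n d -> algC) : depends_only_on (~: S) chi ->
  pair_weight n d S * partial_corr lam (~: S) chi (id_string n d) =
  npairs n d * \sum_x chi x * (chi x)^*.
Proof.
move=> chi_S.
have -> : pair_weight n d S = \sum_(p : basis_idx n d * basis_idx n d)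
                               string_op_on lam S (id_string n d) p.2 p.1.
  rewrite (sum_pairs_prod_on S (fun k => gm_mx lam (id_string n d k))).
  apply: eq_bigr => k _; case: (k \in S) => //.
  under eq_bigr do under eq_bigr do rewrite ffunE /= mxE.
  rewrite (eq_bigr (fun _ => 1)) ?sumr_const ?card_ord // => a _.
  by rewrite (bigD1 a) //= eqxx big1 ?addr0 // => b /negbTE ->.
rewrite /partial_corr (@sum_mul_merge _ (pair_fmerge S)); last 3 first.
- exact: pair_fmergeK.
- by move=> [p1 p2] [q1 q2]; rewrite string_op_on_fmerge.
- by move=> [p1 p2] [q1 q2]; rewrite /= !(depends_fmerger _ _ chi_S) string_op_onC_fmerge.
rewrite -(corr_id lam (fun x y => chi x * (chi y)^*)) /corr tr_mul_pairs.
by congr (_ * _); apply: eq_bigr => p _; rewrite (string_op_split _ S); ring.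
Qed.

Variables (phi chi : basis_idx n d -> algC).
Hypothesis phi_S : depends_only_on S phi.
Hypothesis chi_S : depends_only_on (~: S) chi.
Hypothesis psi_normed : \sum_x `|phi x * chi x| ^+ 2 = 1.
Hypothesis d_gt0 : (0 < d)%N.

Local Notation corr_psi := (corr lam (pure_prod phi chi)).
Local Notation pair := (basis_idx n d * basis_idx n d)%type.

Let mass := \sum_x chi x * (chi x)^*.

Lemma mass_gt0 : 0 < mass.
Proof.
have mass_ge0 : 0 <= mass by apply: sumr_ge0 => x _; rewrite -normCK exprn_ge0.
rewrite lt_def mass_ge0 andbT; apply/eqP => mass0.
have chi0 x : chi x = 0.
  have : chi x * (chi x)^* == 0.
    move/eqP: mass0; rewrite psumr_eq0 => [/allP/(_ x (mem_index_enum _))//|y _].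
    by rewrite -normCK exprn_ge0.
  by rewrite mulf_eq0 conjC_eq0 orbb => /eqP.
move: psi_normed; rewrite big1 => [/eqP|x _]; first by rewrite eq_sym oner_eq0.
by rewrite chi0 mulr0 normr0 expr0n.
Qed.

(* Up to the factor [chi ⊗ chi^*], which lives on the complement of [S] and
   only rescales inner products, the [bessel_vec J] are the strings on [S]. *)
Let bessel_vec J (p : pair) := (string_op_on lam S J p.2 p.1)^* * chi p.1 * (chi p.2)^*.
Let chi_sqr (p : pair) := chi p.1 * (chi p.1)^* * (chi p.2 * (chi p.2)^*).

Lemma sum_chi_sqr : \sum_p chi_sqr p = mass * mass.
Proof. by rewrite big_distrlr /= pair_bigA. Qed.

Lemma chi_sqr_fmerge p q : chi_sqr (pair_fmerge S p q) = chi_sqr q.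
Proof. by case: p q => [p1 p2] [q1 q2]; rewrite /chi_sqr /= !(depends_fmerger _ _ chi_S). Qed.

Lemma bessel_vec_orthogonal J J' :
  string_supp J \subset S -> string_supp J' \subset S ->
  \sum_p (bessel_vec J p)^* * bessel_vec J' p =
  pair_weight n d S * (mass * mass) / npairs n d * (J == J')%:R.
Proof.
move=> J_S J'_S; have N_neq0 := npairs_neq0 n d_gt0; apply: (mulfI N_neq0).
transitivity ((\sum_(p : pair) string_op_on lam S J p.2 p.1 *
                 (string_op_on lam S J' p.2 p.1)^*) * \sum_p chi_sqr p).
  rewrite (@sum_mul_merge _ (pair_fmerge S)); last 3 first.
  - exact: pair_fmergeK.
  - by move=> [p1 p2] [q1 q2]; rewrite !string_op_on_fmerge.
  - exact: chi_sqr_fmerge.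
  congr (_ * _); apply: eq_bigr => p _; rewrite /bessel_vec /chi_sqr.
  by rewrite !rmorphM /= !conjCK; ring.
by rewrite string_op_on_orthogonal // sum_chi_sqr; field.
Qed.

Lemma corr_bessel_coord J : string_supp J \subset S ->
  corr_psi J = npairs n d / (pair_weight n d S * mass) *
               \sum_p (bessel_vec J p)^* * pure_prod phi chi p.1 p.2.
Proof.
move=> /restrictP J_S.
have N_neq0 := npairs_neq0 n d_gt0.
have W_neq0 : pair_weight n d S != 0 by rewrite lt0r_neq0 ?pair_weight_gt0.
have mass_neq0 : mass != 0 by rewrite lt0r_neq0 ?mass_gt0.
have coordE : npairs n d * \sum_p (bessel_vec J p)^* * pure_prod phi chi p.1 p.2 =
              partial_corr lam S phi J * (mass * mass).
  rewrite -sum_chi_sqr /partial_corr (@sum_mul_merge _ (pair_fmerge S)); last 3 first.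
  - exact: pair_fmergeK.
  - by move=> [p1 p2] [q1 q2]; rewrite /= !(depends_fmergel _ _ phi_S) string_op_on_fmerge.
  - exact: chi_sqr_fmerge.
  congr (_ * _); apply: eq_bigr => p _; rewrite /bessel_vec /chi_sqr /pure_prod.
  by rewrite !rmorphM /= !conjCK; ring.
have corrE : npairs n d * corr_psi J =
             partial_corr lam S phi J * partial_corr lam (~: S) chi (id_string n d).
  rewrite (corr_pure_prod_partial lam phi_S chi_S); congr (_ * _).
  by rewrite -{1}J_S; apply: eq_bigr => p _; rewrite string_op_on_fmerge_out ?disjoints_subset.
have idE := partial_corr_id chi_S.
have -> : corr_psi J = partial_corr lam S phi J *
                       partial_corr lam (~: S) chi (id_string n d) / npairs n d.
  by rewrite -corrE; field.
have -> : partial_corr lam (~: S) chi (id_string n d) =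
          npairs n d * mass / pair_weight n d S by rewrite -idE; field.
have -> : \sum_p (bessel_vec J p)^* * pure_prod phi chi p.1 p.2 =
          partial_corr lam S phi J * (mass * mass) / npairs n d by rewrite -coordE; field.
by field; rewrite W_neq0 mass_neq0 N_neq0.
Qed.

Lemma sum_corr_sqr_supported_le :
  \sum_(J : gm_string n d | string_supp J \subset S) corr_psi J ^+ 2 <= d%:R ^+ #|S|.
Proof.
set c := pair_weight n d S * (mass * mass) / npairs n d.
set K := npairs n d / (pair_weight n d S * mass).
have W_gt0 : 0 < pair_weight n d S by apply: pair_weight_gt0.
have N_gt0 : 0 < npairs n d by rewrite lt_def npairs_neq0 // ler0n.
have c_gt0 : 0 < c by rewrite divr_gt0 // !mulr_gt0 // mass_gt0.
have K_gt0 : 0 < K by rewrite divr_gt0 // mulr_gt0 // mass_gt0.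
have r_normed : \sum_(p : pair) `|pure_prod phi chi p.1 p.2| ^+ 2 = 1.
  rewrite -[RHS](expr1n _ 2) -psi_normed expr2 big_distrlr /= pair_bigA /=.
  by apply: eq_bigr => p _; rewrite /pure_prod normrM norm_conjC; ring.
have sqrE J : string_supp J \subset S -> corr_psi J ^+ 2 =
    K ^+ 2 * `|\sum_p (bessel_vec J p)^* * pure_prod phi chi p.1 p.2| ^+ 2.
  move=> J_S; rewrite -real_normK; last by apply: corr_real => // x y; exact: pure_prod_adj.
  by rewrite corr_bessel_coord // normrM exprMn ger0_norm // ltW.
have := bessel_inequality (fun p => pure_prod phi chi p.1 p.2) c_gt0 bessel_vec_orthogonal.
rewrite r_normed mulr1 => bessel.
rewrite (eq_bigr _ sqrE) -big_distrr /=.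
apply: le_trans (ler_wpM2l (exprn_ge0 2 (ltW K_gt0)) bessel) _.
have dS_neq0 : d%:R ^+ #|S| != 0 :> algC by rewrite expf_neq0 // pnatr_eq0 -lt0n.
rewrite (_ : K ^+ 2 * c = d%:R ^+ #|S|) // /K /c (npairs_weight d S).
by field; rewrite dS_neq0 !lt0r_neq0 ?mass_gt0.
Qed.

End SupportedBound.

Lemma sum_strings_fmerge n d (S : {set 'I_n}) (F : gm_string n d -> algC) :
  \sum_J F J = \sum_(s | string_supp s \subset S)
                 \sum_(u | string_supp u \subset ~: S) F (fmerge S s u).
Proof.
rewrite pair_big_dep /= (reindex_onto (fun p : gm_string n d * gm_string n d =>
  fmerge S p.1 p.2) (fun J => (restrict S J, restrict (~: S) J))) /=; last first.
  by move=> J _; apply/ffunP => k; rewrite !ffunE in_setC; case: (k \in S).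
apply: eq_bigl => -[s u] /=.
rewrite /restrict fmerge_fmergel fmergeC_fmerge xpair_eqE.
by rewrite -!(sameP (restrictP _ _) eqP).
Qed.

Lemma sum_sqr_nonid_le n d (S : {set 'I_n}) (t : gm_string n d -> algC) (B : algC) :
  t (id_string n d) = 1 -> \sum_(s | string_supp s \subset S) t s ^+ 2 <= B ->
  \sum_(s | string_supp s \subset S) (if s == id_string n d then 0 else t s ^+ 2) <= B - 1.
Proof.
have id_S : string_supp (id_string n d) \subset S by rewrite string_supp_id sub0set.
move=> t_id le_B; rewrite lerBrDl; apply: le_trans le_B.
rewrite (bigD1 (id_string n d)) //= eqxx add0r.
rewrite [X in _ <= X](bigD1 (id_string n d)) //= t_id expr1n lerD2l.
by rewrite le_eqVlt (eq_bigr (fun s => t s ^+ 2)) ?eqxx // => s /andP[_ /negbTE ->].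
Qed.

Lemma sum_if_const (V : nmodType) (I : finType) (P : pred I) (b : bool) (F : I -> V) :
  \sum_(i | P i) (if b then F i else 0) = if b then \sum_(i | P i) F i else 0.
Proof. by case: b => //; rewrite big1. Qed.

Lemma sum_if_eqr (V : nmodType) (I : finType) (P : pred I) (i0 : I) (b : bool) (y : V) :
  P i0 -> \sum_(i | P i) (if (i == i0) && b then y else 0) = if b then y else 0.
Proof.
move=> P_i0; rewrite (bigD1 i0) //= eqxx big1 ?addr0 => [|i /andP[_ /negbTE ->]] //.
Qed.

Section ProductStateBound.
Variables (n d : nat) (lam : 'I_(d ^ 2 - 1) -> 'M[algC]_d) (beta : {set 'I_n}) (x : int).
Variables (phi chi : basis_idx n d -> algC).
Hypothesis d_gt0 : (0 < d)%N.
Hypothesis lam_gm : gm_basis lam.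
Hypothesis phi_beta : depends_only_on beta phi.
Hypothesis chi_beta : depends_only_on (~: beta) chi.
Hypothesis psi_normed : \sum_y `|phi y * chi y| ^+ 2 = 1.

Local Notation t := (corr lam (pure_prod phi chi)).
Local Notation id := (id_string n d).

Let counted (J : gm_string n d) :=
  (string_supp J != set0) && (x <= (#|string_supp J|)%:Z)%R.
Let a (s : gm_string n d) := if s == id then 0 else t s ^+ 2.

Lemma corr_pure_prod_sqr_ge0 J : 0 <= t J ^+ 2.
Proof. by rewrite -realEsqr; apply: corr_real => // y z; exact: pure_prod_adj. Qed.

Lemma counted_fmerge_le s u :
  string_supp s \subset beta -> string_supp u \subset ~: beta ->
  (if counted (fmerge beta s u) then t (fmerge beta s u) ^+ 2 else 0) <=
  a s * a u + (if (u == id) && (x <= (#|beta|)%:Z)%R then a s else 0)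
            + (if (s == id) && (x <= (#|~: beta|)%:Z)%R then a u else 0).
Proof.
move=> s_beta u_beta.
have s_S : restrict beta s = s by apply/restrictP.
have u_C : restrict (~: beta) u = u by apply/restrictP.
have t_id : t id = 1 by apply: corr_pure_prod_id.
have x_le_supp J (S : {set 'I_n}) : string_supp J \subset S -> counted J -> (x <= (#|S|)%:Z)%R.
  move=> J_S /andP[_ x_le]; apply: le_trans x_le _.
  by rewrite lez_nat; apply: subset_leq_card.
have sqr_ge0 := corr_pure_prod_sqr_ge0.
rewrite (corr_pure_prod_fmerge lam phi_beta chi_beta psi_normed d_gt0 s_beta u_beta) /a.
have [-> | s_neq] := eqVneq s id; have [-> | u_neq] := eqVneq u id.
- rewrite -/(restrict beta id) restrict_id /counted string_supp_id eqxx /=.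
  by rewrite mul0r !if_same !addr0.
- rewrite -fmergeC -/(restrict _ u) u_C t_id /= mul1r mul0r !add0r.
  by case: ifP => [/(x_le_supp _ _ u_beta) -> | _] //; case: ifP.
- rewrite -/(restrict _ s) s_S t_id /= mulr1 mulr0 add0r addr0.
  by case: ifP => [/(x_le_supp _ _ s_beta) -> | _] //; case: ifP.
- rewrite /= !addr0 exprMn; case: ifP => _ //.
  by rewrite mulr_ge0.
Qed.

Lemma sum_corr_sqr_counted_le :
  \sum_(J | counted J) t J ^+ 2 <=
    (d%:R ^+ #|beta| - 1) * (d%:R ^+ #|~: beta| - 1)
    + (if (x <= (#|beta|)%:Z)%R then d%:R ^+ #|beta| - 1 else 0)
    + (if (x <= (#|~: beta|)%:Z)%R then d%:R ^+ #|~: beta| - 1 else 0).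
Proof.
have sumA : \sum_(s | string_supp s \subset beta) a s <= d%:R ^+ #|beta| - 1.
  apply: sum_sqr_nonid_le; first exact: corr_pure_prod_id.
  exact: sum_corr_sqr_supported_le.
have sumB : \sum_(u | string_supp u \subset ~: beta) a u <= d%:R ^+ #|~: beta| - 1.
  apply: sum_sqr_nonid_le; first exact: corr_pure_prod_id.
  under eq_bigr do rewrite -corr_pure_prodC.
  apply: sum_corr_sqr_supported_le; rewrite ?setCK //.
  by rewrite -psi_normed; apply: eq_bigr => y _; rewrite mulrC.
have a_ge0 J : 0 <= a J by rewrite /a; case: ifP => // _; apply: corr_pure_prod_sqr_ge0.
have id_sub (S : {set 'I_n}) : string_supp id \subset S by rewrite string_supp_id sub0set.
rewrite big_mkcond (sum_strings_fmerge beta) /=.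
apply: le_trans.
  apply: ler_sum => s s_beta; apply: ler_sum => u u_beta.
  exact: counted_fmerge_le.
under eq_bigr do rewrite !big_split /= sum_if_eqr ?id_sub //.
rewrite !big_split /= -big_distrlr /= [X in _ + X]exchange_big /=.
under [X in _ + X]eq_bigr do rewrite sum_if_eqr ?id_sub //.
rewrite !sum_if_const; apply: lerD; first apply: lerD.
- by apply: ler_pM => //; apply: sumr_ge0.
- by case: ifP.
- by case: ifP.
Qed.

End ProductStateBound.

Lemma corr_convex_comb n d lam (m : nat) (rho : op n d) (p : 'I_m -> algC)
    (sigma : 'I_m -> op n d) J :
  (forall y z, rho y z = \sum_j p j * sigma j y z) ->
  corr lam rho J = \sum_j p j * corr lam (sigma j) J.
Proof.
move=> rhoE; rewrite /corr /tr_mul.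
transitivity (\sum_y \sum_z \sum_j p j * (sigma j y z * string_op lam J z y)).
  apply: eq_bigr => y _; apply: eq_bigr => z _; rewrite rhoE big_distrl /=.
  by apply: eq_bigr => j _; rewrite mulrA.
under eq_bigr do rewrite exchange_big /=.
rewrite exchange_big /=; apply: eq_bigr => j _.
by rewrite big_distrr /=; apply: eq_bigr => y _; rewrite big_distrr.
Qed.

Unset Implicit Arguments.

Theorem theorem2 (n d : nat) (lam : 'I_(d ^ 2 - 1) -> 'M[algC]_d)
  (beta : {set 'I_n}) (x : int) (rho : op n d) :
  (2 <= n)%N -> (2 <= d)%N -> gm_basis lam ->
  beta != set0 -> setC beta != set0 ->
  separable_bip beta rho ->
  Cx lam x rho <=
    ((d%:R ^+ #|beta| - 1) * (d%:R ^+ #|setC beta| - 1)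
     + (if (x <= (#|beta|)%:Z)%R then d%:R ^+ #|beta| - 1 else 0)
     + (if (x <= (#|setC beta|)%:Z)%R then d%:R ^+ #|setC beta| - 1 else 0) : algC).
Proof.
move=> _ d_ge2 lam_gm _ _ [m [p [phi [chi [[p_ge0 p_sum1] phi_beta chi_beta psi_normed rhoE]]]]].
have d_gt0 : (0 < d)%N by apply: ltnW.
have lam_idx_gt0 : (0 < d ^ 2 - 1)%N.
  by rewrite subn_gt0 expnS expn1 (leq_trans d_ge2) // leq_pmulr.
rewrite (Cx_strings _ _ _ (Ordinal lam_idx_gt0)); set bound := (X in _ <= X).
apply: (@le_trans _ _ (\sum_(J | (string_supp J != set0) && (x <= (#|string_supp J|)%:Z)%R)
    \sum_j p j * corr lam (pure_prod (phi j) (chi j)) J ^+ 2)).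
  apply: ler_sum => J _; rewrite (corr_convex_comb _ _ rhoE).
  apply: sqr_convex_comb_le => // j.
  by apply: corr_real => // y z; apply: pure_prod_adj.
rewrite exchange_big /= -[bound]mul1r -p_sum1 big_distrl /=.
apply: ler_sum => j _; rewrite -big_distrr /=; apply: ler_wpM2l => //.
exact: sum_corr_sqr_counted_le.
Qed.
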